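(* Let $\xi^{(1)},\dots,\xi^{(N)}\in\mathbb{R}^D$, $\epsilon\in(0,1)$, and let $\alpha$, $\mathrm{SV}$, $\mathrm{BSV}\neq\emptyset$, $W$, $\gamma$ and the polyhedron $$\mathcal{U}=\Big\{\xi\in\mathbb{R}^D\ \Big|\ \exists\,\upsilon_n\in\mathbb{R}^D\ (n\in\mathrm{SV})\ \text{s.t.}\ \sum_{n\in\mathrm{SV}}\alpha_n\upsilon_n^\intercal\mathbf{1}\le\gamma,\ \ -\upsilon_n\le W(\xi-\xi^{(n)})\le\upsilon_n\ \ \forall n\in\mathrm{SV}\Big\}$$ be as described in the context. Let $y\in\mathbb{R}^p$, $H\in\mathbb{R}^{p\times D}$ and $\beta\in\mathbb{R}$. Then the robust constraint $$\max_{\xi\in\mathcal{U}}\ (H\xi)^\intercal y\le\beta$$ holds if and only if there exist $\pi\ge0$ and $\mu_n,\rho_n\in\mathbb{R}^D_{\ge0}$ for $n\in\mathrm{SV}$ such that $$\sum_{n\in\mathrm{SV}}(\mu_n-\rho_n)^\intercal W\xi^{(n)}+\pi\gamma\le\beta,\qquad \sum_{n\in\mathrm{SV}}W(\rho_n-\mu_n)+H^\intercal y=0,\qquad \rho_n+\mu_n=\pi\alpha_n\mathbf 1\ \ \forall n\in\mathrm{SV}.$$ (These are linear constraints in $(y,\beta,\pi,\mu,\rho)$ when $\beta$ is affine in $y$.)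
   Context: Let $\Sigma$ be the (positive definite) covariance matrix of the samples and $W=\Sigma^{-1/2}$ (symmetric). For $d=1,\dots,D$ let $l_d=\xi_{d,\max}-\xi_{d,\min}$ (upper minus lower bound of the uncertainty in coordinate $d$). Kernel: $K(\xi^{1},\xi^{2})=\sum_{d=1}^D l_d-\Vert W(\xi^{1}-\xi^{2})\Vert_1$, with feature map $\phi$ into a Hilbert space satisfying $\phi(a)^\intercal\phi(b)=K(a,b)$. One-class support vector clustering solves $$\min_{R,o,\omega}\ R^2+\frac{1}{N\epsilon}\sum_{n=1}^N\omega_n\quad\text{s.t.}\quad \Vert\phi(\xi^{(n)})-o\Vert^2\le R^2+\omega_n,\ \ \omega_n\ge0,\ \ n=1,\dots,N.$$ Let $(R,o,\omega)$ be optimal with multipliers $\alpha,\beta'\in\mathbb{R}^N_{\ge0}$ satisfying the KKT conditions $\mathbf 1^\intercal\alpha=1$, $o=\sum_n\alpha_n\phi(\xi^{(n)})$, $\alpha+\beta'=\frac{1}{N\epsilon}\mathbf 1$, $\omega_n\beta'_n=0$, $\alpha_n(R^2+\omega_n-\Vert\phi(\xi^{(n)})-o\Vert^2)=0$. Let $\mathrm{SV}=\{n:\alpha_n>0\}$, $\mathrm{BSV}=\{n:0<\alpha_n<1/(N\epsilon)\}$, and for any $k\in\mathrm{BSV}$ let $\gamma=\sum_{n\in\mathrm{SV}}\alpha_n\Vert W(\xi^{(k)}-\xi^{(n)})\Vert_1$. Vector inequalities are componentwise and $\mathbf 1$ is the all-ones vector. *)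

From mathcomp Require Import all_boot all_order all_algebra.
Set Implicit Arguments. Unset Strict Implicit. Unset Printing Implicit Defensive.
Import Order.TTheory GRing.Theory Num.Theory.
Local Open Scope ring_scope.

Section Defs.
Variable R : realFieldType.

Definition vle (D : nat) (u v : 'cV[R]_D) : Prop := forall i, u i 0 <= v i 0.

Definition ones (D : nat) : 'cV[R]_D := const_mx 1.

Definition l1norm (D : nat) (v : 'cV[R]_D) : R := \sum_i `|v i 0|.

Definition smean (N D : nat) (xi : 'I_N -> 'cV[R]_D) : 'cV[R]_D :=
  N%:R^-1 *: \sum_n xi n.
Definition scov (N D : nat) (xi : 'I_N -> 'cV[R]_D) : 'M[R]_D :=
  N%:R^-1 *: \sum_n ((xi n - smean xi) *m (xi n - smean xi)^T).

Definition posdef (D : nat) (A : 'M[R]_D) : Prop :=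
  forall x : 'cV[R]_D, x != 0 -> 0 < (x^T *m A *m x) 0 0.

Definition inv_sqrt_of (D : nat) (W S : 'M[R]_D) : Prop :=
  W^T = W /\ posdef W /\ W *m W *m S = 1%:M.

Definition kern (D : nat) (l : 'I_D -> R) (W : 'M[R]_D) (a b : 'cV[R]_D) : R :=
  \sum_d l d - l1norm (W *m (a - b)).

(* ||phi(xi^(n)) - o||^2 with o = sum_m alpha_m phi(xi^(m)), written via the kernel *)
Definition fdist2 (N : nat) (K : 'I_N -> 'I_N -> R) (alpha : 'I_N -> R) (n : 'I_N) : R :=
  K n n - 2 * (\sum_m alpha m * K n m) + \sum_m \sum_k alpha m * alpha k * K m k.

(* (R, o, omega) is feasible for the one-class SVC problem and alpha is a
   KKT multiplier (together with some beta'), with o = sum alpha_n phi(xi^(n)) *)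
Definition svc_kkt (N : nat) (eps : R) (K : 'I_N -> 'I_N -> R) (alpha : 'I_N -> R) : Prop :=
  exists (Rr : R) (omega beta' : 'I_N -> R),
    (forall n, fdist2 K alpha n <= Rr ^+ 2 + omega n) /\
    (forall n, 0 <= omega n) /\
    (forall n, 0 <= alpha n /\ 0 <= beta' n) /\
    \sum_n alpha n = 1 /\
    (forall n, alpha n + beta' n = (N%:R * eps)^-1) /\
    (forall n, omega n * beta' n = 0) /\
    (forall n, alpha n * (Rr ^+ 2 + omega n - fdist2 K alpha n) = 0).

Definition inSV (N : nat) (alpha : 'I_N -> R) (n : 'I_N) : bool := 0 < alpha n.
Definition inBSV (N : nat) (eps : R) (alpha : 'I_N -> R) (n : 'I_N) : bool :=
  (0 < alpha n) && (alpha n < (N%:R * eps)^-1).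

Definition gammak (N D : nat) (alpha : 'I_N -> R) (W : 'M[R]_D)
  (xi : 'I_N -> 'cV[R]_D) (k : 'I_N) : R :=
  \sum_(n | inSV alpha n) alpha n * l1norm (W *m (xi k - xi n)).

Definition inU (N D : nat) (alpha : 'I_N -> R) (W : 'M[R]_D)
  (xi : 'I_N -> 'cV[R]_D) (gamma : R) (x : 'cV[R]_D) : Prop :=
  exists ups : 'I_N -> 'cV[R]_D,
    \sum_(n | inSV alpha n) alpha n * ((ups n)^T *m (const_mx 1 : 'cV[R]_D)) 0 0 <= gamma /\
    forall n, inSV alpha n ->
      vle (- ups n) (W *m (x - xi n)) /\ vle (W *m (x - xi n)) (ups n).

End Defs.

From mathcomp Require Import all_boot all_order all_algebra.
From mathcomp Require Import ring lra.
Set Implicit Arguments. Unset Strict Implicit. Unset Printing Implicit Defensive.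
Import Order.TTheory GRing.Theory Num.Theory.
Local Open Scope ring_scope.

(* Written as a system of linear inequalities in x and
   the slacks u_n, U is a polyhedron, and the stated conditions are exactly the
   feasibility of the dual program with value at most beta: mu_n and rho_n are
   the multipliers of the two bounds on W (x - xi^(n)) and pi that of the
   budget row.  The equivalence is the affine Farkas lemma, which needs U to be
   nonempty; xi^(k) lies in U by the choice of gamma.  Farkas' lemma itself is
   proved by Fourier-Motzkin elimination: eliminating one variable replaces the
   system by nonnegative pairwise combinations of its rows without changing its
   projection, and multipliers for the smaller system pull back to the original
   one. *)

Lemma sum_option (V : nmodType) (J : finType) (F : option J -> V) :
  \sum_j F j = F None + \sum_j F (Some j).
Proof.
rewrite (bigD1 None) //=; congr (_ + _).
rewrite (reindex_omap Some id) //=; last by case.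
by apply: eq_bigl => j; rewrite eqxx.
Qed.

Lemma sum_delta (R : pzSemiRingType) (T : finType) (q : T) (F : T -> R) :
  \sum_p (p == q)%:R * F p = F q.
Proof.
by rewrite (bigD1 q) //= eqxx mul1r big1 ?addr0 // => p /negbTE ->; rewrite mul0r.
Qed.

Section Farkas.
Variable R : realFieldType.

Lemma farkas_1d (J : finType) (a b : J -> R) (beta t0 : R) :
  (forall j, a j * t0 <= b j) ->
  (forall t, (forall j, a j * t <= b j) -> t <= beta) ->
  exists lam : J -> R,
    [/\ forall j, 0 <= lam j, \sum_j lam j * a j = 1 & \sum_j lam j * b j <= beta].
Proof.
move=> feas0 bounded.
case: (pickP (fun j => 0 < a j)) => [j0 a_j0_gt0 | a_le0]; last first.
  pose t := Num.max t0 (beta + 1).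
  have [t0_le_t beta_lt_t] : t0 <= t /\ beta < t.
    by rewrite !le_max lt_max lexx ltrDl ltr01 orbT.
  suff : t <= beta by rewrite leNgt beta_lt_t.
  apply: bounded => j; have := feas0 j; have : a j <= 0 by rewrite leNgt a_le0.
  nra.
have [js a_js_gt0 js_min] := arg_minP (P := fun j => 0 < a j) (fun j => b j / a j) a_j0_gt0.
have t_js_le_beta : b js / a js <= beta.
  apply: bounded => j; have [a_j_gt0 | a_j_lt0 | a_j0] := ltrgtP 0 (a j).
  - by rewrite mulrC -ler_pdivlMr //; apply: js_min.
  - have : t0 <= b js / a js by rewrite ler_pdivlMr // mulrC.
    have := feas0 j; nra.
  - by have := feas0 j; rewrite -a_j0 !mul0r.
exists (fun j => if j == js then (a js)^-1 else 0); split.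
- by move=> j; case: eqP => // _; rewrite invr_ge0 ltW.
- rewrite (bigD1 js) //= eqxx big1 ?addr0 ?mulVf ?gt_eqF // => j /negbTE ->.
  exact: mul0r.
- rewrite (bigD1 js) //= eqxx big1 ?addr0 1?mulrC // => j /negbTE ->.
  exact: mul0r.
Qed.

Definition epi_feasible (V J : finType) (a b : J -> R) (L : J -> V -> R)
    (t : R) (x : V -> R) :=
  forall j, a j * t + \sum_v L j v * x v <= b j.

Section FourierMotzkin.
Variables (V J : finType) (L : J -> V -> R) (v0 : V).

(* Eliminating [v0]: the pair [(p, q)] keeps row [p] when it does not involve
   [v0], combines it with row [q] so that [v0] cancels when their coefficients
   have opposite signs (positive first), and is the trivial row otherwise. *)
Definition fm_weights (pq : J * J) : R * R :=
  let: (p, q) := pq in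
  if L p v0 == 0 then (1, 0)
  else if (0 < L p v0) && (L q v0 < 0) then (- L q v0, L p v0) else (0, 0).

Definition fm_comb (f : J -> R) (pq : J * J) : R :=
  (fm_weights pq).1 * f pq.1 + (fm_weights pq).2 * f pq.2.

Lemma fm_weights_ge0 pq : 0 <= (fm_weights pq).1 /\ 0 <= (fm_weights pq).2.
Proof.
case: pq => p q /=; case: eqP => _; first by split; rewrite /= ?ler01.
by case: andP => [[Lp Lq]|_]; split; rewrite /= ?oppr_ge0 // ltW.
Qed.

Lemma fm_comb_le f g pq : (forall j, f j <= g j) -> fm_comb f pq <= fm_comb g pq.
Proof.
by move=> fg; have [w1 w2] := fm_weights_ge0 pq; rewrite lerD // ler_wpM2l.
Qed.

Lemma fm_comb_pivot pq : fm_comb (L^~ v0) pq = 0.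
Proof.
rewrite /fm_comb; case: pq => p q /=; case: eqP => [->|_] /=.
  by rewrite mulr0 mul0r addr0.
by case: andP => _ /=; [ring | rewrite !mul0r addr0].
Qed.

Lemma fm_comb_affine (a : J -> R) (t : R) (P : pred V) (x : V -> R) pq :
  fm_comb (fun j => a j * t + \sum_(v | P v) L j v * x v) pq =
  fm_comb a pq * t + \sum_(v | P v) fm_comb (L^~ v) pq * x v.
Proof.
rewrite /fm_comb; under [in RHS]eq_bigr do rewrite mulrDl -!mulrA.
by rewrite big_split /= -!mulr_sumr; ring.
Qed.

Lemma fm_lift (g b : J -> R) :
  (forall pq, fm_comb g pq <= fm_comb b pq) ->
  exists s, forall j, g j + L j v0 * s <= b j.
Proof.
move=> comb_le; pose e j := b j - g j; pose r j := e j / L j v0.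
have e_ge0 j : L j v0 = 0 -> 0 <= e j.
  move=> Lj0; have := comb_le (j, j).
  by rewrite /fm_comb /fm_weights /= Lj0 eqxx /= !mul1r !mul0r !addr0 subr_ge0.
have r_le j q : 0 < L j v0 -> L q v0 < 0 -> r q <= r j.
  move=> Lj Lq; have := comb_le (j, q); rewrite /fm_comb /fm_weights /= gt_eqF // Lj Lq /=.
  rewrite /r ler_pdivlMr // mulrAC ler_ndivrMr // /e; nra.
(* [x0] is below every ratio [r j]: the default when no coefficient is negative. *)
pose x0 := - \sum_j `|r j|.
exists (\big[Num.max/x0]_(q | L q v0 < 0) r q) => j; rewrite addrC -lerBrDr -/(e j).
have [Lj_gt0 | Lj_lt0 | Lj0] := ltrgtP 0 (L j v0).
- have ej : e j = L j v0 * r j by rewrite mulrC divfK ?gt_eqF.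
  suff : \big[Num.max/x0]_(q | L q v0 < 0) r q <= r j by rewrite ej; nra.
  apply: bigmax_le => [|q Lq]; last exact: r_le.
  rewrite /x0 lerNl; apply: le_trans (ler_norm _) _.
  by rewrite normrN (bigD1 j) //= lerDl sumr_ge0.
- have ej : e j = L j v0 * r j by rewrite mulrC divfK ?lt_eqF.
  have := le_bigmax_cond (P := fun q => L q v0 < 0) x0 r Lj_lt0; rewrite ej; nra.
- by rewrite -Lj0 mul0r e_ge0.
Qed.

Lemma fm_feasible (a b : J -> R) t x :
  epi_feasible a b L t x ->
  epi_feasible (fm_comb a) (fm_comb b) (fun pq v => fm_comb (L^~ v) pq) t x.
Proof.
by move=> feas pq; rewrite -(@fm_comb_affine a t (fun=> true)); exact: fm_comb_le.
Qed.

Lemma fm_feasible_lift (a b : J -> R) t x :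
  epi_feasible (fm_comb a) (fm_comb b) (fun pq v => fm_comb (L^~ v) pq) t x ->
  exists s, epi_feasible a b L t (fun v => if v == v0 then s else x v).
Proof.
move=> feas; pose g j := a j * t + \sum_(v | v != v0) L j v * x v.
have [s gs] : exists s, forall j, g j + L j v0 * s <= b j.
  apply: fm_lift => pq; rewrite fm_comb_affine.
  by have := feas pq; rewrite (bigD1 v0) //= fm_comb_pivot mul0r add0r.
exists s => j; rewrite (bigD1 v0) //= eqxx addrCA addrC.
by rewrite (eq_bigr (fun v => L j v * x v)) => [|v /negbTE -> //]; exact: gs.
Qed.

Definition fm_pullback (lam : J * J -> R) (j : J) : R :=
  \sum_q lam (j, q) * (fm_weights (j, q)).1 + \sum_p lam (p, j) * (fm_weights (p, j)).2.

Lemma fm_pullback_ge0 lam j : (forall pq, 0 <= lam pq) -> 0 <= fm_pullback lam j.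
Proof.
move=> lam_ge0; rewrite addr_ge0 // sumr_ge0 // => i _; rewrite mulr_ge0 //;
  apply fm_weights_ge0.
Qed.

Lemma sum_fm_pullback lam (f : J -> R) :
  \sum_j fm_pullback lam j * f j = \sum_pq lam pq * fm_comb f pq.
Proof.
transitivity (\sum_p \sum_q lam (p, q) * fm_comb f (p, q)); last first.
  by rewrite pair_bigA; apply: eq_bigr => -[].
under eq_bigr do rewrite mulrDl !mulr_suml.
rewrite big_split /= [X in _ + X]exchange_big -big_split /=.
apply: eq_bigr => p _; rewrite -big_split /=; apply: eq_bigr => q _.
by rewrite /fm_comb /=; ring.
Qed.

End FourierMotzkin.

Lemma farkas_epigraph_support (V : finType) n :
  forall (S : {set V}) (J : finType) (a b : J -> R) (L : J -> V -> R) (beta : R),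
  #|S| = n -> (forall j v, v \notin S -> L j v = 0) ->
  (exists t x, epi_feasible a b L t x) ->
  (forall t x, epi_feasible a b L t x -> t <= beta) ->
  exists lam : J -> R, [/\ forall j, 0 <= lam j, forall v, \sum_j lam j * L j v = 0,
    \sum_j lam j * a j = 1 & \sum_j lam j * b j <= beta].
Proof.
elim: n => [|n IHn] S J a b L beta.
  move=> /eqP; rewrite cards_eq0 => /eqP -> L_supp [t0 [x0 feas0]] bounded.
  have L0 j v : L j v = 0 by rewrite L_supp ?in_set0.
  have sum0 j (x : V -> R) : \sum_v L j v * x v = 0.
    by rewrite big1 // => v _; rewrite L0 mul0r.
  have [|t feas|lam [lam_ge0 lam_a lam_b]] :=
    farkas_1d (a := a) (b := b) (beta := beta) (t0 := t0).
  - by move=> j; have := feas0 j; rewrite sum0 addr0.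
  - by apply: (bounded t x0) => j; rewrite sum0 addr0.
  by exists lam; split => // v; rewrite big1 // => j _; rewrite L0 mulr0.
move=> cardS L_supp [t0 [x0 feas0]] bounded.
have [v0 v0S] : exists v0, v0 \in S by apply/card_gt0P; rewrite cardS.
have cardS' : #|S :\ v0| = n by move: cardS; rewrite (cardsD1 v0) v0S add1n => -[].
pose L' pq v := fm_comb L v0 (L^~ v) pq.
have L'_supp pq v : v \notin S :\ v0 -> L' pq v = 0.
  rewrite in_setD1 negb_and negbK => /orP [/eqP -> | vS]; first exact: fm_comb_pivot.
  by rewrite /L' /fm_comb !L_supp // !mulr0 addr0.
have [|t x /fm_feasible_lift [s /bounded //]|lam [lam_ge0 lam_L lam_a lam_b]] :=
  IHn _ _ (fm_comb L v0 a) (fm_comb L v0 b) L' beta cardS' L'_supp.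
  by exists t0, x0; exact: fm_feasible.
exists (fm_pullback L v0 lam); split; rewrite ?sum_fm_pullback //.
  by move=> j; exact: fm_pullback_ge0.
by move=> v; rewrite sum_fm_pullback; exact: lam_L.
Qed.

Lemma farkas_epigraph (V J : finType) (a b : J -> R) (L : J -> V -> R) (beta : R) :
  (exists t x, epi_feasible a b L t x) ->
  (forall t x, epi_feasible a b L t x -> t <= beta) ->
  exists lam : J -> R, [/\ forall j, 0 <= lam j, forall v, \sum_j lam j * L j v = 0,
    \sum_j lam j * a j = 1 & \sum_j lam j * b j <= beta].
Proof. by apply: (farkas_epigraph_support (S := setT)) => // j v; rewrite in_setT. Qed.

Theorem farkas_affine (V J : finType) (A : J -> V -> R) (b : J -> R) (c : V -> R)
    (beta : R) :
  (exists x, forall j, \sum_v A j v * x v <= b j) ->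
  (forall x, (forall j, \sum_v A j v * x v <= b j) -> \sum_v c v * x v <= beta) <->
  exists lam : J -> R, [/\ forall j, 0 <= lam j, forall v, \sum_j lam j * A j v = c v
    & \sum_j lam j * b j <= beta].
Proof.
move=> [x0 feas0]; split => [bounded | [lam [lam_ge0 lam_A lam_b]] x feas]; last first.
  under eq_bigr do rewrite -lam_A mulr_suml.
  rewrite exchange_big /=; apply: le_trans lam_b; apply: ler_sum => j _.
  under eq_bigr do rewrite -mulrA.
  by rewrite -mulr_sumr ler_wpM2l.
pose a (j : option J) : R := if j is Some _ then 0 else 1.
pose b' j := if j is Some j then b j else 0.
pose L j v := if j is Some j then A j v else - c v.
have [||lam [lam_ge0 lam_L lam_a lam_b]] := @farkas_epigraph V _ a b' L beta.
- exists (\sum_v c v * x0 v), x0; case => [j|] /=; first by rewrite mul0r add0r.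
  by rewrite mul1r -big_split big1 // => v _ /=; rewrite mulNr addrN.
- move=> t x feas; apply: le_trans (bounded x _) => [|j].
    have := feas None; rewrite /= mul1r.
    by under eq_bigr do rewrite mulNr; rewrite sumrN subr_le0.
  by have := feas (Some j); rewrite /= mul0r add0r.
have lam1 : lam None = 1.
  by move: lam_a; rewrite sum_option mulr1 big1 ?addr0 // => j _; rewrite mulr0.
exists (fun j => lam (Some j)); split => //.
  move=> v; apply/eqP; have := lam_L v; rewrite sum_option lam1 mul1r /=.
  by move/eqP; rewrite addrC addr_eq0 opprK.
by move: lam_b; rewrite sum_option mulr0 add0r.
Qed.

End Farkas.

Section BudgetSet.
Variables (R : realFieldType) (I : finType) (D : nat).
Variables (a : I -> R) (W : 'M[R]_D) (z : I -> 'cV[R]_D) (gamma : R).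

Definition in_budget (x : 'cV[R]_D) : Prop :=
  exists ups : I -> 'cV[R]_D,
    \sum_n a n * ((ups n)^T *m (const_mx 1 : 'cV[R]_D)) 0 0 <= gamma /\
    forall n, vle (- ups n) (W *m (x - z n)) /\ vle (W *m (x - z n)) (ups n).

Lemma in_budget_l1 x : \sum_n a n * l1norm (W *m (x - z n)) <= gamma -> in_budget x.
Proof.
move=> le_gamma; exists (fun n => \col_i `|(W *m (x - z n)) i 0|); split.
  apply: le_trans le_gamma; rewrite le_eqVlt; apply/orP; left; apply/eqP.
  apply: eq_bigr => n _; rewrite mxE; congr (_ * _).
  by apply: eq_bigr => i _; rewrite !mxE mulr1.
by move=> n; split => i; rewrite !mxE ?ler_norm // lerNnormlW.
Qed.

Local Notation var := ('I_D + I * 'I_D)%type.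
Local Notation con := (option (I * 'I_D * bool)).

Definition sgn (s : bool) : R := if s then 1 else -1.

(* The variables [inl k] are the coordinates of x and [inr (n, i)] those of the
   slack u_n; row [Some (n, i, s)] reads sgn s (W x)_i - u_n,i <= sgn s (W z_n)_i
   and row [None] is the budget constraint. *)

Definition budget_coef (j : con) (v : var) : R :=
  match j, v with
  | Some (n, i, s), inl k => sgn s * W i k
  | Some (n, i, _), inr p => - (p == (n, i))%:R
  | None, inl _ => 0
  | None, inr (n, _) => a n
  end.

Definition budget_rhs (j : con) : R :=
  if j is Some (n, i, s) then sgn s * (W *m z n) i 0 else gamma.

Definition budget_obj (c : 'cV[R]_D) (v : var) : R := if v is inl k then c k 0 else 0.

Definition xpart (w : var -> R) : 'cV[R]_D := \col_k w (inl k).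
Definition upart (w : var -> R) (n : I) : 'cV[R]_D := \col_i w (inr (n, i)).
Definition mult_part (lam : con -> R) (s : bool) (n : I) : 'cV[R]_D :=
  \col_i lam (Some (n, i, s)).

Lemma sum_var (F : var -> R) :
  \sum_v F v = \sum_k F (inl k) + \sum_n \sum_i F (inr (n, i)).
Proof. by rewrite big_sumType pair_bigA; congr (_ + _); apply: eq_bigr => -[]. Qed.

Lemma sum_con (F : con -> R) :
  \sum_j F j =
  F None + \sum_n \sum_i (F (Some (n, i, true)) + F (Some (n, i, false))).
Proof.
rewrite sum_option; congr (_ + _).
transitivity (\sum_(ni : I * 'I_D) \sum_s F (Some (ni, s))).
  by rewrite pair_bigA; apply: eq_bigr => -[].
by rewrite [RHS]pair_bigA; apply: eq_bigr => -[n i] _; rewrite big_bool.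
Qed.

Lemma budget_row_eval (w : var -> R) (j : con) :
  \sum_v budget_coef j v * w v =
  if j is Some (n, i, s) then sgn s * (W *m xpart w) i 0 - upart w n i 0
  else \sum_n a n * ((upart w n)^T *m (const_mx 1 : 'cV[R]_D)) 0 0.
Proof.
rewrite sum_var; case: j => [[[n i] s]|] /=.
  rewrite !mxE mulr_sumr; congr (_ + _).
    by apply: eq_bigr => k _; rewrite mxE mulrA.
  rewrite pair_bigA /= (eq_bigr (fun p => - ((p == (n, i))%:R * w (inr p)))) => [|[] //].
    by rewrite sumrN sum_delta.
  by move=> m i' _; rewrite mulNr.
rewrite big1 ?add0r => [|k _]; last by rewrite mul0r.
apply: eq_bigr => n _; rewrite mxE mulr_sumr; apply: eq_bigr => i _.
by rewrite !mxE mulr1.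
Qed.

Lemma budget_obj_eval (c : 'cV[R]_D) (w : var -> R) :
  \sum_v budget_obj c v * w v = (c^T *m xpart w) 0 0.
Proof.
rewrite sum_var mxE [X in _ + X]big1 ?addr0 => [|n _].
  by apply: eq_bigr => k _; rewrite !mxE.
by rewrite big1 // => i _; rewrite mul0r.
Qed.

Lemma budget_col_eval (lam : con -> R) (v : var) :
  \sum_j lam j * budget_coef j v =
  match v with
  | inl k => (\sum_n W^T *m (mult_part lam true n - mult_part lam false n)) k 0
  | inr (n, i) => lam None * a n - (mult_part lam true n + mult_part lam false n) i 0
  end.
Proof.
rewrite sum_con; case: v => [k | [n i]] /=.
  rewrite mulr0 add0r summxE; apply: eq_bigr => m _; rewrite mxE; apply: eq_bigr => i _.
  by rewrite !mxE /sgn; ring.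
rewrite !mxE pair_bigA /=.
rewrite (eq_bigr (fun p =>
  - ((p == (n, i))%:R * (lam (Some (p, true)) + lam (Some (p, false)))))).
  by rewrite sumrN sum_delta.
by move=> [m i'] _ /=; rewrite eq_sym; ring.
Qed.

Lemma budget_rhs_eval (lam : con -> R) :
  \sum_j lam j * budget_rhs j = lam None * gamma +
  \sum_n ((mult_part lam true n - mult_part lam false n)^T *m W *m z n) 0 0.
Proof.
rewrite sum_con; congr (_ + _); apply: eq_bigr => n _.
rewrite -mulmxA mxE; apply: eq_bigr => i _.
by rewrite /budget_rhs /sgn !mxE; ring.
Qed.


Lemma in_budgetP x :
  in_budget x <->
  exists2 w : var -> R,
    forall j, \sum_v budget_coef j v * w v <= budget_rhs j & x = xpart w.
Proof.
have Wsub u n i : (W *m (u - z n)) i 0 = (W *m u) i 0 - (W *m z n) i 0.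
  by rewrite mulmxBr !mxE.
split => [[ups [ups_sum ups_bd]] | [w feas ->]].
  pose w v := match v with inl k => x k 0 | inr (n, i) => ups n i 0 end.
  have xw : xpart w = x by apply/matrixP => i j; rewrite ord1 mxE.
  have uw n : upart w n = ups n by apply/matrixP => i j; rewrite ord1 mxE.
  exists w => // -[[[n i] s]|]; rewrite budget_row_eval ?xw.
    have [lo hi] := ups_bd n; have := lo i; have := hi i.
    by rewrite uw Wsub /budget_rhs /sgn !mxE; case: s; lra.
  by under eq_bigr do rewrite uw.
exists (upart w); split; first by have := feas None; rewrite budget_row_eval.
move=> n; split => i;
  [have := feas (Some (n, i, false)) | have := feas (Some (n, i, true))];
  by rewrite budget_row_eval Wsub /budget_rhs /sgn !mxE; lra.
Qed.

Lemma budget_dualP (c : 'cV[R]_D) (beta : R) :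
  (exists lam : con -> R, [/\ forall j, 0 <= lam j,
     forall v, \sum_j lam j * budget_coef j v = budget_obj c v
     & \sum_j lam j * budget_rhs j <= beta]) <->
  (exists (pi : R) (mu rho : I -> 'cV[R]_D),
     [/\ 0 <= pi,
         forall n, vle 0 (mu n) /\ vle 0 (rho n),
         \sum_n ((mu n - rho n)^T *m W *m z n) 0 0 + pi * gamma <= beta,
         \sum_n W^T *m (rho n - mu n) + c = 0 &
         forall n, rho n + mu n = (pi * a n) *: (const_mx 1 : 'cV[R]_D)]).
Proof.
have stationaryE (mu rho : I -> 'cV[R]_D) :
    \sum_n W^T *m (rho n - mu n) + c = 0 <-> \sum_n W^T *m (mu n - rho n) = c.
  have -> : \sum_n W^T *m (rho n - mu n) = - \sum_n W^T *m (mu n - rho n).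
    by rewrite -sumrN; apply: eq_bigr => n _; rewrite -mulmxN opprB.
  rewrite addrC; split => [/eqP | <-]; last by rewrite subrr.
  by rewrite subr_eq0 => /eqP ->.
split => [[lam [lam_ge0 lam_col lam_rhs]] |
  [pi [mu [rho [pi_ge0 mr_ge0 rhs_le col_eq up_eq]]]]].
  exists (lam None), (mult_part lam true), (mult_part lam false); split => //.
  - by move=> n; split => i; rewrite !mxE.
  - by rewrite addrC -budget_rhs_eval.
  - apply/stationaryE/matrixP => k j; rewrite ord1.
    by have := lam_col (inl k); rewrite budget_col_eval.
  - move=> n; apply/matrixP => i j; rewrite ord1 !mxE.
    by have := lam_col (inr (n, i)); rewrite budget_col_eval !mxE /=; lra.
pose lam j := if j is Some (n, i, s) then (if s then mu n else rho n) i 0 else pi.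
have lam_mu n : mult_part lam true n = mu n by apply/matrixP => i j; rewrite ord1 mxE.
have lam_rho n : mult_part lam false n = rho n by apply/matrixP => i j; rewrite ord1 mxE.
exists lam; split.
- move=> [[[n i] s]|] //=; have [mu_ge0 rho_ge0] := mr_ge0 n.
  by case: s; [have := mu_ge0 i | have := rho_ge0 i]; rewrite mxE.
- move=> [k | [n i]]; rewrite budget_col_eval.
    by move/stationaryE: col_eq => <-; under eq_bigr do rewrite lam_mu lam_rho.
  have := congr1 (fun u : 'cV[R]_D => u i 0) (up_eq n).
  by rewrite lam_mu lam_rho !mxE /=; lra.
- by rewrite budget_rhs_eval; under eq_bigr do rewrite lam_mu lam_rho; rewrite addrC.
Qed.

Theorem budget_robust_counterpart (c : 'cV[R]_D) (beta : R) :
  (exists x, in_budget x) ->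
  (forall x, in_budget x -> (c^T *m x) 0 0 <= beta) <->
  (exists (pi : R) (mu rho : I -> 'cV[R]_D),
     [/\ 0 <= pi,
         forall n, vle 0 (mu n) /\ vle 0 (rho n),
         \sum_n ((mu n - rho n)^T *m W *m z n) 0 0 + pi * gamma <= beta,
         \sum_n W^T *m (rho n - mu n) + c = 0 &
         forall n, rho n + mu n = (pi * a n) *: (const_mx 1 : 'cV[R]_D)]).
Proof.
move=> [x0 /in_budgetP [w0 feas0 _]].
apply: iff_trans (budget_dualP c beta).
apply: iff_trans (farkas_affine (budget_obj c) beta (ex_intro _ w0 feas0)).
split => [bounded w feas | bounded x /in_budgetP [w feas ->]].
  by rewrite budget_obj_eval; apply: bounded; apply/in_budgetP; exists w.
by rewrite -budget_obj_eval; exact: bounded.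
Qed.

End BudgetSet.

Section SupportVectors.
Variables (R : realFieldType) (N D : nat) (alpha : 'I_N -> R).
Variables (W : 'M[R]_D) (xi : 'I_N -> 'cV[R]_D) (gamma : R).

Local Notation SV := {n in inSV alpha}.

Lemma sum_SV (V : nmodType) (F : 'I_N -> V) :
  \sum_(n | inSV alpha n) F n = \sum_(s : SV) F (val s).
Proof. exact: big_sub. Qed.

Lemma forall_SV (P : 'I_N -> Prop) :
  (forall n, inSV alpha n -> P n) <-> (forall s : SV, P (val s)).
Proof.
by split => [P_SV s | P_SV n n_SV]; [apply: P_SV (valP s) | apply: P_SV (Sub n n_SV)].
Qed.

Definition sv_ext (f : SV -> 'cV[R]_D) (n : 'I_N) : 'cV[R]_D :=
  if insub n is Some s then f s else 0.

Lemma sv_ext_val f s : sv_ext f (val s) = f s.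
Proof. by rewrite /sv_ext valK. Qed.

Lemma inU_in_budget x :
  inU alpha W xi gamma x <->
  in_budget (fun s : SV => alpha (val s)) W (fun s => xi (val s)) gamma x.
Proof.
split => [[ups [ups_sum ups_bd]] | [ups [ups_sum ups_bd]]].
  exists (fun s => ups (val s)); split; first by move: ups_sum; rewrite sum_SV.
  by move=> s; apply: ups_bd (valP s).
exists (sv_ext ups); split.
  by rewrite sum_SV; under eq_bigr do rewrite sv_ext_val.
by apply/forall_SV => s; rewrite sv_ext_val.
Qed.

Lemma dual_SV (c : 'cV[R]_D) (beta : R) : W^T = W ->
  (exists (pi : R) (mu rho : 'I_N -> 'cV[R]_D),
     [/\ 0 <= pi,
         forall n, inSV alpha n -> vle 0 (mu n) /\ vle 0 (rho n),
         \sum_(n | inSV alpha n) ((mu n - rho n)^T *m W *m xi n) 0 0 + pi * gamma <= beta,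
         \sum_(n | inSV alpha n) (W *m (rho n - mu n)) + c = 0 &
         forall n, inSV alpha n ->
           rho n + mu n = (pi * alpha n) *: (const_mx 1 : 'cV[R]_D)]) <->
  (exists (pi : R) (mu rho : SV -> 'cV[R]_D),
     [/\ 0 <= pi,
         forall s, vle 0 (mu s) /\ vle 0 (rho s),
         \sum_s ((mu s - rho s)^T *m W *m xi (val s)) 0 0 + pi * gamma <= beta,
         \sum_s W^T *m (rho s - mu s) + c = 0 &
         forall s, rho s + mu s = (pi * alpha (val s)) *: (const_mx 1 : 'cV[R]_D)]).
Proof.
move=> Wsym; rewrite Wsym.
split => [[pi [mu [rho [pi_ge0 /forall_SV mr_ge0 rhs_le col_eq /forall_SV up_eq]]]] |
  [pi [mu [rho [pi_ge0 mr_ge0 rhs_le col_eq up_eq]]]]].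
  exists pi, (fun s => mu (val s)), (fun s => rho (val s)).
  by split => //; [move: rhs_le | move: col_eq]; rewrite sum_SV.
exists pi, (sv_ext mu), (sv_ext rho); split => //.
- by apply/forall_SV => s; rewrite !sv_ext_val.
- by rewrite sum_SV; under eq_bigr do rewrite !sv_ext_val.
- by rewrite sum_SV; under eq_bigr do rewrite !sv_ext_val.
- by apply/forall_SV => s; rewrite !sv_ext_val.
Qed.

End SupportVectors.

Unset Implicit Arguments.

Theorem proposition3 (R : realFieldType) (N D p : nat)
  (xi : 'I_N -> 'cV[R]_D) (eps : R) (ximin ximax : 'I_D -> R)
  (W : 'M[R]_D) (alpha : 'I_N -> R) (k : 'I_N)
  (y : 'cV[R]_p) (H : 'M[R]_(p, D)) (beta : R) :
  0 < eps < 1 ->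
  posdef (scov xi) ->
  inv_sqrt_of W (scov xi) ->
  svc_kkt eps (fun a b => kern (fun d => ximax d - ximin d) W (xi a) (xi b)) alpha ->
  inBSV eps alpha k ->
  let gamma := gammak alpha W xi k in
  (forall x : 'cV[R]_D, inU alpha W xi gamma x -> ((H *m x)^T *m y) 0 0 <= beta)
  <->
  (exists (pi : R) (mu rho : 'I_N -> 'cV[R]_D),
     [/\ 0 <= pi,
         forall n, inSV alpha n -> vle 0 (mu n) /\ vle 0 (rho n),
         \sum_(n | inSV alpha n) ((mu n - rho n)^T *m W *m xi n) 0 0 + pi * gamma <= beta,
         \sum_(n | inSV alpha n) (W *m (rho n - mu n)) + H^T *m y = 0 &
         forall n, inSV alpha n -> rho n + mu n = (pi * alpha n) *: (const_mx 1 : 'cV[R]_D)]).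
Proof.
move=> _ _ [Wsym _] _ _ gamma.
have objE (x : 'cV[R]_D) : ((H *m x)^T *m y) 0 0 = ((H^T *m y)^T *m x) 0 0.
  have -> : (H^T *m y)^T *m x = ((H *m x)^T *m y)^T by rewrite !trmx_mul !trmxK mulmxA.
  by rewrite [RHS]mxE.
have xi_k_U : exists x, in_budget (fun s : {n in inSV alpha} => alpha (val s)) W
    (fun s => xi (val s)) gamma x.
  by exists (xi k); apply: in_budget_l1; rewrite /gamma /gammak sum_SV.
rewrite (dual_SV alpha xi gamma _ _ Wsym) -(budget_robust_counterpart _ _ xi_k_U).
split => robust x /inU_in_budget xU; [rewrite -objE | rewrite objE]; exact: robust.
Qed.
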